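(* Let $\hat{\mathcal{C}}_k=\langle\hat c_k,\hat G_k,\hat A_k,\hat b_k\rangle\subset\mathbb{R}^n$ be a constrained zonotope with $\mathcal{R}_{\phi,k}\subseteq\hat{\mathcal{C}}_k$. For $i=1,\dots,n_{\phi,k}$ let the side information at step $k$ be encoded by a set $\mathcal{S}_{i,k}\subseteq\mathbb{R}^n$ such that every $x\in\mathcal{R}_{\phi,k}$ lies in $\mathcal{S}_{i,k}$, where each $\mathcal{S}_{i,k}$ is of one of two types: (linear) $\mathcal{S}_{i,k}=\{x:|H_{i,k}x-y_{i,k}|\le r_{i,k}\}$ with $H_{i,k}\in\mathbb{R}^{p\times n}$, $y_{i,k}\in\mathbb{R}^p$, $r_{i,k}\in\mathbb{R}^p_{\ge0}$; (nonlinear) $\mathcal{S}_{i,k}=\{x:|h_{i,k}(x)|\le r_{i,k}\}$ with $h_{i,k}:\mathbb{R}^n\to\mathbb{R}^p$ differentiable and $r_{i,k}\in\mathbb{R}^p_{\ge0}$ (absolute values and inequalities componentwise). Run the following procedure. Initialize $(\bar c_k,\bar G_k,\bar A_k,\bar b_k)=(\hat c_k,\hat G_k,\hat A_k,\hat b_k)$. For $i=1,\dots,n_{\phi,k}$ in order (all right-hand sides using the values before the update): - in the linear case, set $\bar G_k\leftarrow[\bar G_k,\ 0]$, $\bar A_k\leftarrow\begin{bmatrix}\bar A_k&0\\ H_{i,k}\bar G_k&-\operatorname{diag}(r_{i,k})\end{bmatrix}$, $\bar b_k\leftarrow\begin{bmatrix}\bar b_k\\ y_{i,k}-H_{i,k}\bar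 c_k\end{bmatrix}$, and keep $\bar c_k$; - in the nonlinear case, pick a point $x^*_{i,k}\in\mathbb{R}^n$, let $J_{i,k}=\frac{\partial h_{i,k}}{\partial x}\big|_{x^*_{i,k}}$, and pick a zonotope $\langle c_{L,i,k},G_{L,i,k}\rangle\subset\mathbb{R}^p$ such that $h_{i,k}(x)-h_{i,k}(x^*_{i,k})-J_{i,k}(x-x^*_{i,k})\in\langle c_{L,i,k},G_{L,i,k}\rangle$ for every $x$ in the current constrained zonotope $\langle\bar c_k,\bar G_k,\bar A_k,\bar b_k\rangle$; then set $\bar G_k\leftarrow[\bar G_k,\ 0,\ 0]$, $\bar A_k\leftarrow\begin{bmatrix}\bar A_k&0&0\\ J_{i,k}\bar G_k&-\operatorname{diag}(r_{i,k})&G_{L,i,k}\end{bmatrix}$, $\bar b_k\leftarrow\begin{bmatrix}\bar b_k\\ -h_{i,k}(x^*_{i,k})-J_{i,k}(\bar c_k-x^*_{i,k})-c_{L,i,k}\end{bmatrix}$, and keep $\bar c_k$. Then the resulting constrained zonotope $\bar{\mathcal{C}}_k=\langle\bar c_k,\bar G_k,\bar A_k,\bar b_k\rangle$ satisfies $\bar{\mathcal{C}}_k\supseteq\mathcal{R}_{\phi,k}$.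
   Context: A zonotope with center $c\in\mathbb{R}^n$ and generator matrix $G\in\mathbb{R}^{n\times\gamma}$ is $\langle c,G\rangle=\{c+G\beta:\beta\in[-1,1]^\gamma\}$. A constrained zonotope is $\langle c,G,A,b\rangle=\{c+G\beta:\ A\beta=b,\ \beta\in[-1,1]^{n_g}\}$ with $c\in\mathbb{R}^n$, $G\in\mathbb{R}^{n\times n_g}$, $A\in\mathbb{R}^{n_c\times n_g}$, $b\in\mathbb{R}^{n_c}$ (zero blocks above have the sizes needed to make the matrices conformable). Consider the discrete-time system $x(k+1)=f(x(k),u(k))+w(k)$ with $f$ an unknown twice differentiable function, process noise $w(k)\in\mathcal{Z}_w$ ($\mathcal{Z}_w$ a zonotope), inputs $u(k)\in\mathcal{U}_k$ (zonotopes), initial set $\mathcal{X}_0$ (a zonotope), and signal temporal logic side-information formulas $\phi_k=\phi_{1,k}\wedge\dots\wedge\phi_{n_{\phi,k},k}$ for each step $k$. The STL-constrained reachable set is $\mathcal{R}_{\phi,N}=\{x(N)\in\mathbb{R}^n:\ x(0)\in\mathcal{X}_0,\ x(0)\models\phi_0,\ \text{and for all }k\in\{0,\dots,N-1\}:\ x(k+1)=f(x(k),u(k))+w(k),\ w(k)\in\mathcal{Z}_w,\ u(k)\in\mathcal{U}_k,\ x(k+1)\models\phi_{k+1}\}$. For $r\in\mathbb{R}^p$, $\operatorname{diag}(r)$ denotes the diagonal matrix with diagonal $r$. *)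

From HB Require Import structures.
From mathcomp Require Import all_boot all_order all_algebra.
From mathcomp Require Import all_classical all_reals all_analysis.
Set Implicit Arguments. Unset Strict Implicit. Unset Printing Implicit Defensive.
Import Order.TTheory GRing.Theory Num.Theory.
Import numFieldNormedType.Exports.
Local Open Scope ring_scope.

Definition in_zono (R : realType) (n gam : nat) (c : 'cV[R]_n) (G : 'M[R]_(n, gam))
    (x : 'cV[R]_n) : Prop :=
  exists beta : 'cV[R]_gam,
    (forall j, -1 <= beta j 0 <= 1) /\ x = c + G *m beta.

Record czono (R : realType) (n : nat) := CZ {
  cz_ng : nat; cz_nc : nat;
  cz_c : 'cV[R]_n;
  cz_G : 'M[R]_(n, cz_ng);
  cz_A : 'M[R]_(cz_nc, cz_ng);
  cz_b : 'cV[R]_cz_nc }.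

Definition in_czono (R : realType) (n : nat) (Z : czono R n) (x : 'cV[R]_n) : Prop :=
  exists beta : 'cV[R]_(cz_ng Z),
    (forall j, -1 <= beta j 0 <= 1) /\ cz_A Z *m beta = cz_b Z /\
    x = cz_c Z + cz_G Z *m beta.

Definition diagc (R : realType) (p : nat) (r : 'cV[R]_p) : 'M[R]_p := diag_mx r^T.

(* One item of side information at step k, together with the choices made
   by the procedure in the nonlinear case (x*, J, <c_L, G_L>). *)
Inductive side_info (R : realType) (n : nat) :=
| SLin (p : nat) (H : 'M[R]_(p, n)) (y r : 'cV[R]_p)
| SNonlin (p : nat) (h : 'cV[R]_n -> 'cV[R]_p) (r : 'cV[R]_p)
    (xs : 'cV[R]_n) (J : 'M[R]_(p, n)) (gam : nat) (cL : 'cV[R]_p) (GL : 'M[R]_(p, gam)).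

Definition si_set (R : realType) (n : nat) (s : side_info R n) (x : 'cV[R]_n) : Prop :=
  match s with
  | SLin p H y r => forall j : 'I_p, `|(H *m x - y) j 0| <= r j 0
  | SNonlin p h r _ _ _ _ _ => forall j : 'I_p, `|h x j 0| <= r j 0
  end.

Definition si_update (R : realType) (n : nat) (Z : czono R n) (s : side_info R n)
  : czono R n :=
  match s with
  | SLin p H y r =>
      @CZ R n (cz_ng Z + p) (cz_nc Z + p) (cz_c Z)
        (row_mx (cz_G Z) 0)
        (block_mx (cz_A Z) 0 (H *m cz_G Z) (- diagc r))
        (col_mx (cz_b Z) (y - H *m cz_c Z))
  | SNonlin p h r xs J gam cL GL =>
      @CZ R n (cz_ng Z + p + gam) (cz_nc Z + p) (cz_c Z)
        (row_mx (row_mx (cz_G Z) 0) 0)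
        (col_mx (row_mx (row_mx (cz_A Z) 0) 0)
                (row_mx (row_mx (J *m cz_G Z) (- diagc r)) GL))
        (col_mx (cz_b Z) (- h xs - J *m (cz_c Z - xs) - cL))
  end.

Definition si_ok (R : realType) (n : nat) (Z : czono R n) (s : side_info R n) : Prop :=
  match s with
  | SLin p H y r => forall j : 'I_p, 0 <= r j 0
  | SNonlin p h r xs J gam cL GL =>
      (forall j : 'I_p, 0 <= r j 0) /\
      (forall x, differentiable h x) /\
      (forall v, 'd h xs v = J *m v) /\
      (forall x, in_czono Z x -> in_zono cL GL (h x - h xs - J *m (x - xs)))
  end.

Fixpoint run_proc (R : realType) (n : nat) (Z : czono R n) (ss : seq (side_info R n))
  : czono R n :=
  match ss with
  | [::] => Z
  | s :: ss' => run_proc (si_update Z s) ss'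
  end.

Fixpoint proc_ok (R : realType) (n : nat) (Z : czono R n) (ss : seq (side_info R n))
  : Prop :=
  match ss with
  | [::] => True
  | s :: ss' => si_ok Z s /\ proc_ok (si_update Z s) ss'
  end.

Fixpoint all_contain (R : realType) (n : nat) (Rset : set 'cV[R]_n)
  (ss : seq (side_info R n)) : Prop :=
  match ss with
  | [::] => True
  | s :: ss' => (forall x, Rset x -> si_set s x) /\ all_contain Rset ss'
  end.

From HB Require Import structures.
From mathcomp Require Import all_boot all_order all_algebra.
From mathcomp Require Import all_classical all_reals all_analysis.
From mathcomp Require Import lra.
Set Implicit Arguments. Unset Strict Implicit. Unset Printing Implicit Defensive.
Import Order.TTheory GRing.Theory Num.Theory.
Import numFieldNormedType.Exports.
Local Open Scope ring_scope.

(* A point x = c + G beta of the current set that satisfies the side information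
   stays in the updated set: with v = H x - y (resp. v = h x, the linearization
   remainder being c_L + G_L g by the enclosure), the new constraint row reduces to
   diag(r) d = v, which is solved by d_j = v_j / r_j in [-1, 1] since |v| <= r. *)

Section UpdateSteps.
Variables (R : realType) (n : nat).

Lemma unit_cube_col_mx m1 m2 (a : 'cV[R]_m1) (b : 'cV[R]_m2) :
  (forall j, -1 <= a j 0 <= 1) -> (forall j, -1 <= b j 0 <= 1) ->
  forall j, -1 <= col_mx a b j 0 <= 1.
Proof.
move=> ha hb j; rewrite -[j]splitK.
by case: (fintype.split j) => k /=; rewrite ?col_mxEu ?col_mxEd.
Qed.

(* Where r_j = 0 the bound forces v_j = 0, so d_j := 0 works there. *)
Lemma diagc_mul_unit_cube p (r v : 'cV[R]_p) :
  (forall j, `|v j 0| <= r j 0) ->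
  exists d : 'cV[R]_p, (forall j, -1 <= d j 0 <= 1) /\ diagc r *m d = v.
Proof.
move=> hv.
exists (\col_j (if r j 0 == 0 then 0 else v j 0 / r j 0)); split.
- move=> j; rewrite mxE; case: eqP => [_|/eqP rj_neq0].
    by rewrite lerN10 ler01.
  have rj_gt0 : 0 < r j 0 by rewrite lt_def rj_neq0 (le_trans _ (hv j)).
  rewrite -ler_norml normrM normfV (gtr0_norm rj_gt0) ler_pdivrMr // mul1r.
  exact: hv.
- apply/matrixP => i j; rewrite (ord1 j) /diagc mul_diag_mx !mxE.
  case: eqP => [ri_eq0|/eqP ri_neq0]; last by rewrite mulrCA divff // mulr1.
  by have := hv i; rewrite ri_eq0 normr_le0 => /eqP ->; rewrite mulr0.
Qed.

Lemma in_czono_update_SLin (Z : czono R n) p (H : 'M[R]_(p, n)) (y r : 'cV[R]_p) x :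
  in_czono Z x -> si_set (SLin H y r) x -> in_czono (si_update Z (SLin H y r)) x.
Proof.
case: Z => ng nc c G A b [beta [beta_box [Abeta ->]]] hx.
rewrite /= in beta beta_box Abeta hx *.
have [d [d_box rd]] := diagc_mul_unit_cube hx.
exists (col_mx beta d); split; first exact: unit_cube_col_mx.
split; last by rewrite /= mul_row_col mul0mx addr0.
rewrite /= mul_block_col mul0mx addr0 Abeta mulNmx rd mulmxDr mulmxA.
by congr col_mx; apply/matrixP => i j; rewrite !mxE; lra.
Qed.

Lemma in_czono_update_SNonlin (Z : czono R n) p (h : 'cV[R]_n -> 'cV[R]_p) r xs
    (J : 'M[R]_(p, n)) gam cL (GL : 'M[R]_(p, gam)) x :
  in_czono Z x -> si_set (SNonlin h r xs J cL GL) x ->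
  in_zono cL GL (h x - h xs - J *m (x - xs)) ->
  in_czono (si_update Z (SNonlin h r xs J cL GL)) x.
Proof.
case: Z => ng nc c G A b [beta [beta_box [Abeta ->]]] hx [g [g_box remainder]].
rewrite /= in beta beta_box Abeta hx remainder *.
have [d [d_box rd]] := diagc_mul_unit_cube hx.
exists (col_mx (col_mx beta d) g); split.
  by apply: unit_cube_col_mx => //; apply: unit_cube_col_mx.
split; last by rewrite /= !mul_row_col !mul0mx !addr0.
rewrite /= mul_col_mx !mul_row_col !mul0mx !addr0 Abeta mulNmx rd.
have -> : GL *m g = h (c + G *m beta) - h xs - J *m (c + G *m beta - xs) - cL.
  by rewrite remainder addrAC subrr add0r.
rewrite !mulmxDr !mulmxN mulmxA.
by congr col_mx; apply/matrixP => i j; rewrite !mxE; lra.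
Qed.

Lemma in_czono_si_update (Z : czono R n) s x :
  si_ok Z s -> in_czono Z x -> si_set s x -> in_czono (si_update Z s) x.
Proof.
case: s => [p H y r | p h r xs J gam cL GL] /= s_ok xZ x_side.
  exact: in_czono_update_SLin xZ x_side.
case: s_ok => _ [_ [_ remainder_in]].
exact: in_czono_update_SNonlin xZ x_side (remainder_in x xZ).
Qed.

End UpdateSteps.

Theorem theorem2 (R : realType) (n : nat) (Rphi : set 'cV[R]_n)
  (Chat : czono R n) (ss : seq (side_info R n)) :
  (forall x, Rphi x -> in_czono Chat x) ->
  all_contain Rphi ss ->
  proc_ok Chat ss ->
  forall x, Rphi x -> in_czono (run_proc Chat ss) x.
Proof.
elim: ss Chat => [|s ss IH] Chat //= Rphi_sub [s_contains ss_contain] [s_ok ss_ok].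
apply: IH => // x Rx.
exact: in_czono_si_update s_ok (Rphi_sub x Rx) (s_contains x Rx).
Qed.
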